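(* Let $\mathcal{A}=(A,B,s,t,\Delta)$ be a left multiplier bialgebroid and $B_0\subseteq B$ a two-sided ideal with $s(B_0)A=A=t(B_0)A$; let $s_0,t_0$ be the restrictions of $s,t$ to $B_0$. Then the natural map ${}_{B_0}A\otimes A^{B_0}\to{}_BA\otimes A^B$ is an isomorphism. Let $\Delta_0$ be the composition of $\Delta$ with the induced isomorphism $A\bar\times_BA\to A\bar\times_{B_0}A$. Then $\mathcal{A}_0=(A,B_0,s_0,t_0,\Delta_0)$ is a left multiplier bialgebroid, and every left counit for $\mathcal{A}$ takes values in $B_0$ and is a left counit for $\mathcal{A}_0$.
   Context: All algebras are associative complex algebras, not necessarily unital. For an algebra $A$ with $A_A$ non-degenerate, $L(A)$ denotes right $A$-module endomorphisms of $A$ (containing $A$ via left multiplication) and $M(A)=\{T\in L(A):aT\in A\ \forall a\}$. For an algebra $D$ with a homomorphism $s\colon D\to M(A)$ and anti-homomorphism $t\colon D\to M(A)$, ${}_DA\otimes A^D$ denotes the quotient of $A\otimes A$ by the span of $s(x)a\otimes b-a\otimes t(x)b$ ($x\in D$), and $A\bar\times_DA$ the algebra of linear endomorphisms $T$ of ${}_DA\otimes A^D$ such that for all $a,b\in A$ there are $T(a\otimes1),T(1\otimes b)\in{}_DA\otimes A^D$ with $T(a\otimes b)=T(a\otimes1)(1\otimes b)=T(1\otimes b)(a\otimes1)$. A left multiplier bialgebroid is a tuple $(A,B,s,t,\Delta)$: (i) $A,B$ algebras, $A_A$ non-degenerate and idempotent; (ii) $s\colon B\to M(A)$ homomorphism,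 $t\colon B\to M(A)$ anti-homomorphism with commuting images, $s,t$ injective, $s(B)A=A=t(B)A$; ${}_BA\otimes A^B$ is non-degenerate as a right module over $A\otimes1$ and over $1\otimes A$; (iii) $\Delta\colon A\to A\bar\times_BA$ is an algebra homomorphism; (iv) $\Delta(s(x)t(y)as(x')t(y'))=(t(y)\otimes s(x))\Delta(a)(t(y')\otimes s(x'))$; (v) if $\Delta(b)(1\otimes c)=\sum p_i\otimes q_i$ and $\Delta(b)(a\otimes1)=\sum u_j\otimes v_j$ then $\sum\Delta(p_i)(a\otimes1)\otimes q_i=\sum u_j\otimes\Delta(v_j)(1\otimes c)$ in $A^{\otimes3}$ modulo the span of $s(x)a\otimes b\otimes c-a\otimes t(x)b\otimes c$ and $a\otimes s(x)b\otimes c-a\otimes b\otimes t(x)c$. Canonical maps $T_\lambda(a\otimes b)=\Delta(b)(a\otimes1)$, $T_\rho(a\otimes b)=\Delta(a)(1\otimes b)$. A left counit is a linear $\varepsilon\colon A\to B$ with $\varepsilon(s(x)a)=x\varepsilon(a)$, $\varepsilon(t(y)a)=\varepsilon(a)y$, $\sum t(\varepsilon(c_i))d_i=ab$ whenever $T_\rho(a\otimes b)=\sum c_i\otimes d_i$, and $\sum s(\varepsilon(d_i))c_i=ba$ whenever $T_\lambda(a\otimes b)=\sum c_i\otimes d_i$. *)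

From mathcomp Require Import all_boot all_algebra.
From mathcomp Require Import boolp Rstruct.
From mathcomp.real_closed Require Import complex.
Set Implicit Arguments.
Unset Strict Implicit.
Unset Printing Implicit Defensive.
Import GRing.Theory.
Local Open Scope ring_scope.

Notation CC := (Rdefinitions.R)[i].

(* [:: (k1,x1); ...; (kn,xn)] stands for k1 x1 + ... + kn xn. *)
Definition fv (X : Type) := seq (CC * X).

Definition coef (X : Type) (v : fv X) (x : X) : CC :=
  \sum_(p <- v) (if `[< p.2 = x >] then p.1 else 0).

Definition inspan (X : Type) (Rel : fv X -> Prop) (v : fv X) : Prop :=
  exists rs : seq (CC * fv X), List.Forall (fun r => Rel r.2) rs /\
    forall x, coef v x = \sum_(r <- rs) r.1 * coef r.2 x.

Definition fscale (X : Type) (k : CC) (v : fv X) : fv X :=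
  [seq (k * p.1, p.2) | p <- v].

(* equality in the quotient of the free space by span Rel *)
Definition fequiv (X : Type) (Rel : fv X -> Prop) (v w : fv X) : Prop :=
  inspan Rel (v ++ fscale (-1) w).

Definition is_lin (V W : lmodType CC) (f : V -> W) : Prop :=
  (forall x y, f (x + y) = f x + f y) /\ (forall (k : CC) x, f (k *: x) = k *: f x).

Definition is_alg (V : lmodType CC) (m : V -> V -> V) : Prop :=
  (forall x y z, m x (m y z) = m (m x y) z) /\
  (forall x y z, m (x + y) z = m x z + m y z) /\
  (forall x y z, m x (y + z) = m x y + m x z) /\
  (forall (k : CC) x y, m (k *: x) y = k *: m x y) /\
  (forall (k : CC) x y, m x (k *: y) = k *: m x y).

Definition is_subalg (V : lmodType CC) (m : V -> V -> V) (P : V -> Prop) : Prop :=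
  P 0 /\ (forall x y, P x -> P y -> P (x + y)) /\
  (forall (k : CC) x, P x -> P (k *: x)) /\ (forall x y, P x -> P y -> P (m x y)).

Definition is_ideal (V : lmodType CC) (m : V -> V -> V) (P : V -> Prop) : Prop :=
  P 0 /\ (forall x y, P x -> P y -> P (x + y)) /\
  (forall (k : CC) x, P x -> P (k *: x)) /\
  (forall x y, P y -> P (m x y) /\ P (m y x)).

Definition nondeg_r (V : lmodType CC) (m : V -> V -> V) : Prop :=
  forall a, (forall b, m a b = 0) -> a = 0.

Definition idempotent (V : lmodType CC) (m : V -> V -> V) : Prop :=
  forall a, exists l : seq (V * V), a = \sum_(p <- l) m p.1 p.2.

Definition is_mult (V : lmodType CC) (m : V -> V -> V) (T : V -> V) : Prop :=
  is_lin T /\ (forall a b, T (m a b) = m (T a) b) /\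
  (forall a, exists c, forall b, m a (T b) = m c b).

Section Bialgebroid.
Variables (A B : lmodType CC) (mA : A -> A -> A) (mB : B -> B -> B).

Definition spans (P : B -> Prop) (s : B -> A -> A) : Prop :=
  forall a, exists l : seq (B * A), List.Forall (fun p => P p.1) l /\
    a = \sum_(p <- l) s p.1 p.2.

(* generating relations of  _P A (x) A^P  inside the free space on A*A *)
Definition rel2 (P : B -> Prop) (s t : B -> A -> A) (v : fv (A * A)) : Prop :=
  (exists a a' b, v = [:: (1, (a + a', b)); (-1, (a, b)); (-1, (a', b))]) \/
  (exists a b b', v = [:: (1, (a, b + b')); (-1, (a, b)); (-1, (a, b'))]) \/
  (exists (k : CC) a b, v = [:: (1, (k *: a, b)); (-k, (a, b))]) \/
  (exists (k : CC) a b, v = [:: (1, (a, k *: b)); (-k, (a, b))]) \/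
  (exists x a b, P x /\ v = [:: (1, (s x a, b)); (-1, (a, t x b))]).

(* generating relations of  A (x) A (x) A  modulo the span in axiom (v) *)
Definition rel3 (P : B -> Prop) (s t : B -> A -> A) (v : fv (A * A * A)) : Prop :=
  (exists a a' b c, v = [:: (1, (a + a', b, c)); (-1, (a, b, c)); (-1, (a', b, c))]) \/
  (exists a b b' c, v = [:: (1, (a, b + b', c)); (-1, (a, b, c)); (-1, (a, b', c))]) \/
  (exists a b c c', v = [:: (1, (a, b, c + c')); (-1, (a, b, c)); (-1, (a, b, c'))]) \/
  (exists (k : CC) a b c, v = [:: (1, (k *: a, b, c)); (-k, (a, b, c))]) \/
  (exists (k : CC) a b c, v = [:: (1, (a, k *: b, c)); (-k, (a, b, c))]) \/
  (exists (k : CC) a b c, v = [:: (1, (a, b, k *: c)); (-k, (a, b, c))]) \/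
  (exists x a b c, P x /\ v = [:: (1, (s x a, b, c)); (-1, (a, t x b, c))]) \/
  (exists x a b c, P x /\ v = [:: (1, (a, s x b, c)); (-1, (a, b, t x c))]).

Definition rmulL (v : fv (A * A)) (a : A) : fv (A * A) :=
  [seq (p.1, (mA p.2.1 a, p.2.2)) | p <- v].
Definition rmulR (v : fv (A * A)) (b : A) : fv (A * A) :=
  [seq (p.1, (p.2.1, mA p.2.2 b)) | p <- v].
Definition lmul2 (f g : A -> A) (v : fv (A * A)) : fv (A * A) :=
  [seq (p.1, (f p.2.1, g p.2.2)) | p <- v].

(* A comultiplication Delta is encoded by D : A -> A -> A -> fv (A*A), where
   D c a b is a representative of Delta(c)(a (x) b); Delta(c) is the linear
   extension to the free space, applied to representatives: *)
Definition Dapp (D : A -> A -> A -> fv (A * A)) (c : A) (v : fv (A * A)) :=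
  flatten [seq fscale p.1 (D c p.2.1 p.2.2) | p <- v].

Definition tensL (F : A -> fv (A * A)) (v : fv (A * A)) : fv (A * A * A) :=
  flatten [seq [seq (p.1 * w.1, (w.2.1, w.2.2, p.2.2)) | w <- F p.2.1] | p <- v].
Definition tensR (G : A -> fv (A * A)) (v : fv (A * A)) : fv (A * A * A) :=
  flatten [seq [seq (p.1 * w.1, (p.2.1, w.2.1, w.2.2)) | w <- G p.2.2] | p <- v].

(* Left multiplier bialgebroid (A, P, s|P, t|P, Delta), where the base algebra
   is the subalgebra {x in B | P x} of the algebra (B, mB); with P = True this
   is the definition for the base algebra B itself. *)
Definition is_LMB (P : B -> Prop) (s t : B -> A -> A)
    (D : A -> A -> A -> fv (A * A)) : Prop :=
  let R2 := rel2 P s t in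
  (is_alg mA /\ is_alg mB /\ is_subalg mB P /\ nondeg_r mA /\ idempotent mA) /\
  ((forall x, P x -> is_mult mA (s x)) /\ (forall x, P x -> is_mult mA (t x)) /\
      (forall x y, P x -> P y ->
         [/\ s (x + y) =1 (fun a => s x a + s y a),
             (forall k : CC, s (k *: x) =1 (fun a => k *: s x a)) &
             s (mB x y) =1 (fun a => s x (s y a))]) /\
      (forall x y, P x -> P y ->
         [/\ t (x + y) =1 (fun a => t x a + t y a),
             (forall k : CC, t (k *: x) =1 (fun a => k *: t x a)) &
             t (mB x y) =1 (fun a => t y (t x a))]) /\
      (forall x y, P x -> P y -> forall a, s x (t y a) = t y (s x a))) /\
  ((forall x y, P x -> P y -> s x =1 s y -> x = y) /\
      (forall x y, P x -> P y -> t x =1 t y -> x = y) /\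
      spans P s /\ spans P t /\
      (forall v, (forall a, inspan R2 (rmulL v a)) -> inspan R2 v) /\
      (forall v, (forall b, inspan R2 (rmulR v b)) -> inspan R2 v)) /\
  (* (iii) Delta(c) in A barx_P A, and Delta an algebra homomorphism *)
  ((forall c v, inspan R2 v -> inspan R2 (Dapp D c v)) /\
      (forall c a, exists u, forall b, fequiv R2 (D c a b) (rmulR u b)) /\
      (forall c b, exists w, forall a, fequiv R2 (D c a b) (rmulL w a)) /\
      (forall c c' a b, fequiv R2 (D (c + c') a b) (D c a b ++ D c' a b)) /\
      (forall (k : CC) c a b, fequiv R2 (D (k *: c) a b) (fscale k (D c a b))) /\
      (forall c c' a b, fequiv R2 (D (mA c c') a b) (Dapp D c (D c' a b)))) /\
  (forall x y x' y', P x -> P y -> P x' -> P y' -> forall a c,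
     (forall b, mA c b = s x (t y (mA a (s x' (t y' b))))) ->
     forall p q, fequiv R2 (D c p q) (lmul2 (t y) (s x) (D a (t y' p) (s x' q)))) /\
  (forall a b c (L1 L2 : fv (A * A)),
     (forall a', fequiv R2 (D b a' c) (rmulL L1 a')) ->   (* L1 = Delta(b)(1 (x) c) *)
     (forall b', fequiv R2 (D b a b') (rmulR L2 b')) ->   (* L2 = Delta(b)(a (x) 1) *)
     forall F G : A -> fv (A * A),
     (forall p b', fequiv R2 (D p a b') (rmulR (F p) b')) ->  (* F p = Delta(p)(a (x) 1) *)
     (forall v a', fequiv R2 (D v a' c) (rmulL (G v) a')) ->  (* G v = Delta(v)(1 (x) c) *)
     fequiv (rel3 P s t) (tensL F L1) (tensR G L2)).

Definition is_lcounit (P : B -> Prop) (s t : B -> A -> A)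
    (D : A -> A -> A -> fv (A * A)) (eps : A -> B) : Prop :=
  let R2 := rel2 P s t in
  (forall a, P (eps a)) /\ is_lin eps /\
      (forall x a, P x -> eps (s x a) = mB x (eps a)) /\
      (forall y a, P y -> eps (t y a) = mB (eps a) y) /\
      (* T_rho(a (x) b) = Delta(a)(1 (x) b) = L *)
      (forall a b L, (forall a', fequiv R2 (D a a' b) (rmulL L a')) ->
          \sum_(p <- L) p.1 *: t (eps p.2.1) p.2.2 = mA a b) /\
      (* T_lambda(a (x) b) = Delta(b)(a (x) 1) = L *)
      (forall a b L, (forall b', fequiv R2 (D b a b') (rmulR L b')) ->
          \sum_(p <- L) p.1 *: s (eps p.2.2) p.2.1 = mA b a).

End Bialgebroid.

From mathcomp Require Import all_boot all_algebra.
From mathcomp Require Import boolp Rstruct.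
From mathcomp.real_closed Require Import complex.
From mathcomp Require Import ring.
Set Implicit Arguments.
Unset Strict Implicit.
Unset Printing Implicit Defensive.
Import GRing.Theory.
Local Open Scope ring_scope.

(* The balanced tensor product over the ideal B0 has, compared with the one
   over B, only the balancings s x a (x) b ~ a (x) t x b with x in B0.  Since
   s(B0)A = A, write a = sum_i s y_i c_i with y_i in B0; then each balancing by
   an arbitrary x is a combination of balancings by x y_i and y_i, which lie in
   the ideal.  The same holds in the threefold tensor product, so all quotients
   occurring in the axioms coincide, and Delta_0 differs from Delta only by the
   choice of representatives.  A left counit takes values in B0 because
   eps (s y c) = y eps c. *)

Definition bind (X Y : Type) (F : X -> fv Y) (v : fv X) : fv Y :=
  flatten [seq fscale p.1 (F p.2) | p <- v].

(* A named constant rather than an inline [if], so that [ring] treats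
   [dirac x z] as an atom even when [x] involves module operations. *)
Definition dirac (X : Type) (x z : X) : CC := if `[< x = z >] then 1 else 0.

Section Coefficients.
Variable X : Type.
Implicit Types (u v w : fv X) (z : X).

Lemma coef_nil z : coef ([::] : fv X) z = 0.
Proof. by rewrite /coef big_nil. Qed.

Lemma coef_cons k x v z :
  coef ((k, x) :: v) z = k * dirac x z + coef v z.
Proof. by rewrite /coef big_cons /dirac /=; case: ifP; rewrite (mulr1, mulr0). Qed.

Lemma coef_cat v w z : coef (v ++ w) z = coef v z + coef w z.
Proof. by rewrite /coef big_cat. Qed.

Lemma coef_fscale k v z : coef (fscale k v) z = k * coef v z.
Proof.
elim: v => [|[k' x] v IH]; first by rewrite coef_nil mulr0.
by rewrite /= !coef_cons IH; ring.
Qed.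

Lemma sum_fscale k v (g : X -> CC) :
  \sum_(p <- fscale k v) p.1 * g p.2 = k * \sum_(p <- v) p.1 * g p.2.
Proof. by rewrite big_map mulr_sumr; apply: eq_bigr => p _; rewrite mulrA. Qed.

Lemma sum_coef0 (g : X -> CC) u :
  coef u =1 (fun _ => 0) -> \sum_(p <- u) p.1 * g p.2 = 0.
Proof.
have [n] := ubnP (size u); elim: n u => // n IH [|[k x] u] /ltnSE size_u u0.
  by rewrite big_nil.
pose at_x (p : CC * X) := `[< p.2 = x >].
have sum_at_x : \sum_(p <- (k, x) :: u | at_x p) p.1 * g p.2 = coef ((k, x) :: u) x * g x.
  by rewrite /coef -big_mkcond mulr_suml; apply: eq_bigr => p /asboolP ->.
rewrite (bigID at_x) /= sum_at_x u0 mul0r add0r -big_filter; apply: IH => [|z].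
  rewrite /= /at_x asboolT //= size_filter.
  exact: leq_ltn_trans (count_size _ u) size_u.
rewrite /coef big_filter; have := u0 z; rewrite /coef (bigID at_x) /=.
case: (pselect (z = x)) => [->|zx].
  by move=> _; rewrite big1 // => p; rewrite /at_x; case: asboolP.
rewrite big1 ?add0r // => p; rewrite /at_x => /asboolP ->.
by case: asboolP => // xz; case: zx.
Qed.

Lemma eq_sum_coef (g : X -> CC) v w : coef v =1 coef w ->
  \sum_(p <- v) p.1 * g p.2 = \sum_(p <- w) p.1 * g p.2.
Proof.
move=> vw; apply/eqP; rewrite -subr_eq0 -mulN1r -sum_fscale -big_cat /=.
by apply/eqP/sum_coef0 => z; rewrite coef_cat coef_fscale vw; ring.
Qed.

End Coefficients.

Lemma coef_bind (X Y : Type) (F : X -> fv Y) v z :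
  coef (bind F v) z = \sum_(p <- v) p.1 * coef (F p.2) z.
Proof.
elim: v => [|[k x] v IH]; first by rewrite big_nil /bind /= coef_nil.
by rewrite /bind /= -/(bind F v) coef_cat coef_fscale IH big_cons.
Qed.

Section Span.
Variables (X : Type) (Rel : fv X -> Prop).
Implicit Types (u v w : fv X).

Lemma inspan_gen r : Rel r -> inspan Rel r.
Proof.
move=> Rr; exists [:: (1, r)]; split; first by constructor.
by move=> z; rewrite big_seq1 mul1r.
Qed.

Lemma inspan_lincomb (rs : seq (CC * fv X)) v :
  List.Forall (fun r => inspan Rel r.2) rs ->
  (forall z, coef v z = \sum_(r <- rs) r.1 * coef r.2 z) -> inspan Rel v.
Proof.
move=> rs_span vE.
suff [qs [qs_rel qsE]] : exists qs : seq (CC * fv X),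
    List.Forall (fun r => Rel r.2) qs /\
    forall z, \sum_(r <- rs) r.1 * coef r.2 z = \sum_(q <- qs) q.1 * coef q.2 z.
  by exists qs; split => // z; rewrite vE qsE.
elim: rs rs_span {vE} => [|[k u] rs IH] rs_span.
  by exists [::]; split => // z; rewrite !big_nil.
inversion rs_span as [|? ? [qs1 [qs1_rel E1]] rs_span']; subst.
have [qs2 [qs2_rel E2]] := IH rs_span'.
exists ([seq (k * q.1, q.2) | q <- qs1] ++ qs2); split.
  apply/List.Forall_app; split => //; apply/List.Forall_map.
  exact: qs1_rel.
move=> z; rewrite big_cons big_cat big_map /= E1 E2 mulr_sumr.
by congr (_ + _); apply: eq_bigr => q _; rewrite mulrA.
Qed.

Lemma inspan_lincomb2 k1 u1 k2 u2 v : inspan Rel u1 -> inspan Rel u2 ->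
  (forall z, coef v z = k1 * coef u1 z + k2 * coef u2 z) -> inspan Rel v.
Proof.
move=> span1 span2 vE; apply: (inspan_lincomb (rs := [:: (k1, u1); (k2, u2)])).
  by apply: List.Forall_cons => //; apply: List.Forall_cons.
by move=> z; rewrite !big_cons big_nil /= addr0 vE.
Qed.

Lemma inspan_eq_coef v w : inspan Rel w -> coef v =1 coef w -> inspan Rel v.
Proof.
move=> span_w vw; apply: (inspan_lincomb2 (k1 := 1) (k2 := 0) span_w span_w) => z.
by rewrite vw; ring.
Qed.

Lemma inspan_gen_coef r v : Rel r -> coef v =1 coef r -> inspan Rel v.
Proof. by move=> /inspan_gen; apply: inspan_eq_coef. Qed.

Lemma fequiv_sym v w : fequiv Rel v w -> fequiv Rel w v.
Proof.
move=> vw; apply: (inspan_lincomb2 (k1 := -1) (k2 := 0) vw vw) => z.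
by rewrite !(coef_cat, coef_fscale); ring.
Qed.

Lemma fequiv_trans v w u : fequiv Rel v w -> fequiv Rel w u -> fequiv Rel v u.
Proof.
move=> vw wu; apply: (inspan_lincomb2 (k1 := 1) (k2 := 1) vw wu) => z.
by rewrite !(coef_cat, coef_fscale); ring.
Qed.

Lemma fequiv_cat v1 w1 v2 w2 : fequiv Rel v1 w1 -> fequiv Rel v2 w2 ->
  fequiv Rel (v1 ++ v2) (w1 ++ w2).
Proof.
move=> vw1 vw2; apply: (inspan_lincomb2 (k1 := 1) (k2 := 1) vw1 vw2) => z.
by rewrite !(coef_cat, coef_fscale); ring.
Qed.

Lemma fequiv_scale k v w : fequiv Rel v w -> fequiv Rel (fscale k v) (fscale k w).
Proof.
move=> vw; apply: (inspan_lincomb2 (k1 := k) (k2 := 0) vw vw) => z.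
by rewrite !(coef_cat, coef_fscale); ring.
Qed.

Lemma inspan_fequiv v w : fequiv Rel v w -> inspan Rel w -> inspan Rel v.
Proof.
move=> vw span_w; apply: (inspan_lincomb2 (k1 := 1) (k2 := 1) vw span_w) => z.
by rewrite !(coef_cat, coef_fscale); ring.
Qed.

End Span.

Lemma inspan_sub (X : Type) (Rel Rel' : fv X -> Prop) v :
  (forall r, Rel r -> inspan Rel' r) -> inspan Rel v -> inspan Rel' v.
Proof.
move=> sub [rs [rs_rel vE]]; apply: (inspan_lincomb (rs := rs)) => //.
exact: List.Forall_impl (fun r => sub r.2) _ rs_rel.
Qed.

Lemma bind_cat (X Y : Type) (F : X -> fv Y) v w :
  bind F (v ++ w) = bind F v ++ bind F w.
Proof. by rewrite /bind map_cat flatten_cat. Qed.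

Lemma inspan_bind (X Y : Type) (Rel : fv X -> Prop) (Rel' : fv Y -> Prop)
    (F : X -> fv Y) v :
  (forall r, Rel r -> inspan Rel' (bind F r)) -> inspan Rel v ->
  inspan Rel' (bind F v).
Proof.
move=> F_span [rs [rs_rel vE]].
apply: (inspan_lincomb (rs := [seq (r.1, bind F r.2) | r <- rs])).
  by apply/List.Forall_map; apply: List.Forall_impl (fun r => F_span r.2) _ rs_rel.
move=> z; rewrite coef_bind big_map /=.
have -> : \sum_(p <- v) p.1 * coef (F p.2) z =
          \sum_(p <- bind id rs) p.1 * coef (F p.2) z.
  by apply: (eq_sum_coef (fun x => coef (F x) z)) => y; rewrite vE coef_bind.
elim: rs {rs_rel vE} => [|[k u] rs IH]; first by rewrite /bind !big_nil.
rewrite /bind /= -/(bind id rs) big_cat (sum_fscale _ _ (fun x => coef (F x) z)).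
by rewrite IH big_cons /= coef_bind.
Qed.

Lemma fequiv_bind (X Y : Type) (Rel : fv X -> Prop) (Rel' : fv Y -> Prop)
    (F : X -> fv Y) v w :
  (forall r, Rel r -> inspan Rel' (bind F r)) -> fequiv Rel v w ->
  fequiv Rel' (bind F v) (bind F w).
Proof.
move=> F_span /(inspan_bind F_span); rewrite bind_cat => span_vw.
apply: (inspan_eq_coef span_vw) => z.
rewrite !coef_cat !coef_bind coef_fscale coef_bind.
by rewrite (sum_fscale _ _ (fun x => coef (F x) z)).
Qed.

Lemma fequiv_bind_fun (X Y : Type) (Rel : fv Y -> Prop) (F G : X -> fv Y) v :
  (forall x, fequiv Rel (F x) (G x)) -> fequiv Rel (bind F v) (bind G v).
Proof.
move=> FG.
apply: (inspan_lincomb (rs := [seq (p.1, F p.2 ++ fscale (-1) (G p.2)) | p <- v])).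
  by apply/List.Forall_map/List.Forall_forall => p _; apply: FG.
move=> z; rewrite coef_cat coef_fscale !coef_bind big_map mulr_sumr -big_split /=.
by apply: eq_bigr => p _; rewrite coef_cat coef_fscale; ring.
Qed.

Definition fvmap (X Y : Type) (f : X -> Y) (v : fv X) : fv Y :=
  [seq (p.1, f p.2) | p <- v].

Section FvMap.
Variables (X Y : Type) (f : X -> Y).

Lemma fvmap_cat v w : fvmap f (v ++ w) = fvmap f v ++ fvmap f w.
Proof. exact: map_cat. Qed.

Lemma fvmap_fscale k v : fvmap f (fscale k v) = fscale k (fvmap f v).
Proof. by rewrite /fvmap /fscale -!map_comp. Qed.

Lemma coef_fvmap v : coef (fvmap f v) =1 coef (bind (fun x => [:: (1, f x)]) v).
Proof.
move=> z; elim: v => [|[k x] v IH]; first by rewrite /bind /= !coef_nil.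
by rewrite /bind /= -/(bind _ v) !coef_cons IH; ring.
Qed.

Lemma inspan_fvmap (Rel : fv X -> Prop) (Rel' : fv Y -> Prop) v :
  (forall r, Rel r -> inspan Rel' (fvmap f r)) -> inspan Rel v ->
  inspan Rel' (fvmap f v).
Proof.
move=> f_span /(inspan_bind (F := fun x => [:: (1, f x)]) (Rel' := Rel')) span_v.
apply: inspan_eq_coef (coef_fvmap v); apply: span_v => r /f_span span_r.
by apply: inspan_eq_coef span_r _ => z; rewrite coef_fvmap.
Qed.

Lemma fequiv_fvmap (Rel : fv X -> Prop) (Rel' : fv Y -> Prop) v w :
  (forall r, Rel r -> inspan Rel' (fvmap f r)) -> fequiv Rel v w ->
  fequiv Rel' (fvmap f v) (fvmap f w).
Proof.
move=> f_span vw; rewrite /fequiv -fvmap_fscale -fvmap_cat.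
exact: inspan_fvmap f_span vw.
Qed.

End FvMap.

Lemma is_lin0 (V W : lmodType CC) (f : V -> W) : is_lin f -> f 0 = 0.
Proof. by move=> [_ fZ]; rewrite -(scale0r (0 : V)) fZ scale0r. Qed.

Lemma spans_ind (A B : lmodType CC) (P : B -> Prop) (s : B -> A -> A)
    (Q : A -> Prop) :
  spans P s -> Q 0 -> (forall a a', Q a -> Q a' -> Q (a + a')) ->
  (forall x c, P x -> Q (s x c)) -> forall a, Q a.
Proof.
move=> P_spans Q0 QD Qs a; have [l [l_P ->]] := P_spans a.
elim: l l_P => [|[x c] l IH] l_P; first by rewrite big_nil.
by inversion l_P; subst; rewrite big_cons; apply: QD; [apply: Qs | apply: IH].
Qed.

Section BalancedTensors.
Variables (A B : lmodType CC) (s t : B -> A -> A).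

Lemma rel2_mono (P Q : B -> Prop) r :
  (forall x, P x -> Q x) -> rel2 P s t r -> rel2 Q s t r.
Proof.
move=> PQ [r_rel|[r_rel|[r_rel|[r_rel|[x [a [b [Px ->]]]]]]]];
  do ?[by left | right]; by exists x, a, b; split; [apply: PQ|].
Qed.

Lemma rel3_mono (P Q : B -> Prop) r :
  (forall x, P x -> Q x) -> rel3 P s t r -> rel3 Q s t r.
Proof.
move=> PQ [r_rel|[r_rel|[r_rel|[r_rel|[r_rel|[r_rel|
    [[x [a [b [c [Px ->]]]]]|[x [a [b [c [Px ->]]]]]]]]]]]];
  try by do ?[by left | right].
- by do 6 right; left; exists x, a, b, c; split; [apply: PQ|].
- by do 7 right; exists x, a, b, c; split; [apply: PQ|].
Qed.

Lemma inspan_rel3_tensor_right (P : B -> Prop) c v : inspan (rel2 P s t) v ->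
  inspan (rel3 P s t) (fvmap (fun p => (p.1, p.2, c)) v).
Proof.
apply: inspan_fvmap => r
  [[a1 [a2 [b ->]]]|[[a [b1 [b2 ->]]]|[[k [a [b ->]]]|[[k [a [b ->]]]|[x [a [b [Px ->]]]]]]]];
  apply: inspan_gen.
- by left; exists a1, a2, b, c.
- by right; left; exists a, b1, b2, c.
- by do 3 right; left; exists k, a, b, c.
- by do 4 right; left; exists k, a, b, c.
- by do 6 right; left; exists x, a, b, c.
Qed.

Lemma inspan_rel3_tensor_left (P : B -> Prop) a v : inspan (rel2 P s t) v ->
  inspan (rel3 P s t) (fvmap (fun p => (a, p.1, p.2)) v).
Proof.
apply: inspan_fvmap => r
  [[b1 [b2 [c ->]]]|[[b [c1 [c2 ->]]]|[[k [b [c ->]]]|[[k [b [c ->]]]|[x [b [c [Px ->]]]]]]]];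
  apply: inspan_gen.
- by right; left; exists a, b1, b2, c.
- by right; right; left; exists a, b, c1, c2.
- by do 4 right; left; exists k, a, b, c.
- by do 5 right; left; exists k, a, b, c.
- by do 7 right; exists x, a, b, c.
Qed.

Definition balancing (x : B) (a b : A) : fv (A * A) :=
  [:: (1, (s x a, b)); (-1, (a, t x b))].

Variables (mB : B -> B -> B) (B0 : B -> Prop).
Hypotheses (s_lin : forall x, is_lin (s x))
  (sM : forall x y a, s (mB x y) a = s x (s y a))
  (tM : forall x y a, t (mB x y) a = t y (t x a))
  (B0_mull : forall x y, B0 y -> B0 (mB x y))
  (B0_spans : spans B0 s).

Let R := rel2 B0 s t.

(* s x (s y c) (x) b = s (x y) c (x) b ~ c (x) t (x y) b = c (x) t y (t x b)
   ~ s y c (x) t x b, balancing first by x y and then by y. *)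
Lemma balancing_s_in_span x y c b : B0 y -> inspan R (balancing x (s y c) b).
Proof.
move=> B0y; apply: (inspan_lincomb2 (k1 := 1) (k2 := -1)
  (u1 := [:: (1, (s (mB x y) c, b)); (-1, (c, t (mB x y) b))])
  (u2 := [:: (1, (s y c, t x b)); (-1, (c, t y (t x b)))])).
- by apply: inspan_gen; do 4 right; exists (mB x y), c, b; split; first exact: B0_mull.
- by apply: inspan_gen; do 4 right; exists y, c, (t x b).
- by move=> z; rewrite /balancing !coef_cons !coef_nil sM tM; ring.
Qed.

Lemma balancing0_in_span x b : inspan R (balancing x 0 b).
Proof.
have zero_tensor b' : inspan R [:: (1, (0, b'))].
  apply: (inspan_gen_coef (r := [:: (1, (0 *: (0 : A), b')); (-0, (0, b'))])).
    by do 2 right; left; exists 0, 0, b'.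
  by move=> z; rewrite !coef_cons !coef_nil scale0r; ring.
apply: (inspan_lincomb2 (k1 := 1) (k2 := -1) (zero_tensor b) (zero_tensor (t x b))).
by move=> z; rewrite /balancing (is_lin0 (s_lin x)) !coef_cons !coef_nil; ring.
Qed.

Lemma balancingD_in_span x a a' b : inspan R (balancing x a b) ->
  inspan R (balancing x a' b) -> inspan R (balancing x (a + a') b).
Proof.
move=> span_a span_a'.
pose add1 a1 a2 b1 : fv (A * A) :=
  [:: (1, (a1 + a2, b1)); (-1, (a1, b1)); (-1, (a2, b1))].
have add1_span a1 a2 b1 : inspan R (add1 a1 a2 b1).
  by apply: inspan_gen; left; exists a1, a2, b1.
apply: (inspan_lincomb (rs := [:: (1, add1 (s x a) (s x a') b);
  (-1, add1 a a' (t x b)); (1, balancing x a b); (1, balancing x a' b)])).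
  apply/List.Forall_forall => r /= [<-|[<-|[<-|[<-|[]]]]] //=; exact: add1_span.
move=> z; rewrite !big_cons big_nil /balancing !coef_cons !coef_nil (s_lin x).1 /=.
ring.
Qed.

Lemma balancing_in_span x a b : inspan R (balancing x a b).
Proof.
move: a; apply: (spans_ind B0_spans) => [|a a'|y c B0y].
- exact: balancing0_in_span.
- exact: balancingD_in_span.
- exact: balancing_s_in_span.
Qed.

Lemma inspan_rel2_ideal u : inspan (rel2 (fun _ => True) s t) u <-> inspan R u.
Proof.
split; apply: inspan_sub => r; last first.
  by move=> r_rel; apply/inspan_gen/(rel2_mono (fun _ _ => I) r_rel).
case=> [r_rel|[r_rel|[r_rel|[r_rel|[x [a [b [_ ->]]]]]]]]; last exact: balancing_in_span.
all: by apply: inspan_gen; do ?[by left | right].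
Qed.

Lemma inspan_rel3_ideal u :
  inspan (rel3 (fun _ => True) s t) u <-> inspan (rel3 B0 s t) u.
Proof.
split; apply: inspan_sub => r; last first.
  by move=> r_rel; apply/inspan_gen/(rel3_mono (fun _ _ => I) r_rel).
case=> [r_rel|[r_rel|[r_rel|[r_rel|[r_rel|[r_rel|
    [[x [a [b [c [_ ->]]]]]|[x [a [b [c [_ ->]]]]]]]]]]]];
  try by apply: inspan_gen; do ?[by left | right].
- by have := inspan_rel3_tensor_right c (balancing_in_span x a b).
- by have := inspan_rel3_tensor_left a (balancing_in_span x b c).
Qed.

End BalancedTensors.

Section BaseChange.
Variables (A B : lmodType CC) (mA : A -> A -> A) (mB : B -> B -> B)
  (s t : B -> A -> A).

Lemma fequiv_lmul2 (P : B -> Prop) (f g : A -> A) v w :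
  is_lin f -> is_lin g ->
  (forall x a, P x -> f (s x a) = s x (f a)) ->
  (forall x b, P x -> g (t x b) = t x (g b)) ->
  fequiv (rel2 P s t) v w -> fequiv (rel2 P s t) (lmul2 f g v) (lmul2 f g w).
Proof.
move=> [fD fZ] [gD gZ] fs gt.
apply: (fequiv_fvmap (f := fun q : A * A => (f q.1, g q.2))) => r
  [[a1 [a2 [b ->]]]|[[a [b1 [b2 ->]]]|[[k [a [b ->]]]|[[k [a [b ->]]]|[x [a [b [Px ->]]]]]]]];
  apply: inspan_gen.
- by left; exists (f a1), (f a2), (g b); rewrite /fvmap /= fD.
- by right; left; exists (f a), (g b1), (g b2); rewrite /fvmap /= gD.
- by do 2 right; left; exists k, (f a), (g b); rewrite /fvmap /= fZ.
- by do 3 right; left; exists k, (f a), (g b); rewrite /fvmap /= gZ.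
- by do 4 right; exists x, (f a), (g b); rewrite /fvmap /= fs ?gt.
Qed.

Lemma is_LMB_equiv_comult (P : B -> Prop) (D D0 : A -> A -> A -> fv (A * A)) :
  is_LMB mA mB P s t D ->
  (forall c a b, fequiv (rel2 P s t) (D0 c a b) (D c a b)) ->
  is_LMB mA mB P s t D0.
Proof.
rewrite /is_LMB; cbv zeta; set R := rel2 P s t.
move=> [base [[s_mult [t_mult [s_hom [t_hom st_comm]]]]
  [nondeg [[D1 [D2 [D3 [D4 [D5 D6]]]]] [Div Dv]]]]] D0D.
have DD0 c a b : fequiv R (D c a b) (D0 c a b) by apply: fequiv_sym.
have Dapp_equiv c v : fequiv R (Dapp D0 c v) (Dapp D c v).
  exact: (fequiv_bind_fun (F := fun q => D0 c q.1 q.2) (G := fun q => D c q.1 q.2)).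
have Dapp_fequiv c v w : fequiv R v w -> fequiv R (Dapp D c v) (Dapp D c w).
  move=> vw; apply: (fequiv_bind (F := fun q => D c q.1 q.2) _ vw) => r /inspan_gen.
  exact: D1.
do 3 (split; first by []).
split; [split; [|split; [|split; [|split; [|split]]]]|split].
- by move=> c v /(D1 c); apply: inspan_fequiv.
- move=> c a; have [u Du] := D2 c a.
  by exists u => b; apply: fequiv_trans (D0D c a b) (Du b).
- move=> c b; have [u Du] := D3 c b.
  by exists u => a; apply: fequiv_trans (D0D c a b) (Du a).
- move=> c c' a b; apply: fequiv_trans (D0D _ _ _) _.
  by apply: fequiv_trans (D4 c c' a b) _; apply: fequiv_cat.
- move=> k c a b; apply: fequiv_trans (D0D _ _ _) _.
  by apply: fequiv_trans (D5 k c a b) _; apply: fequiv_scale.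
- move=> c c' a b; apply: fequiv_trans (D0D _ _ _) _.
  apply: fequiv_trans (D6 c c' a b) _; apply: fequiv_sym.
  by apply: fequiv_trans (Dapp_equiv _ _) _; apply/Dapp_fequiv/fequiv_sym.
- move=> x y x' y' Px Py Px' Py' a c cE p q; apply: fequiv_trans (D0D _ _ _) _.
  apply: fequiv_trans (Div x y x' y' Px Py Px' Py' a c cE p q) _.
  apply: fequiv_lmul2 (DD0 _ _ _).
  + exact: (t_mult y Py).1.
  + exact: (s_mult x Px).1.
  + by move=> z a1 Pz; rewrite st_comm.
  + by move=> z b1 Pz; rewrite st_comm.
- move=> a b c L1 L2 DL1 DL2 F G DF DG.
  apply: (Dv a b c L1 L2) => [a'|b'|p b'|v a']; apply: fequiv_trans (DD0 _ _ _) _.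
  + exact: DL1.
  + exact: DL2.
  + exact: DF.
  + exact: DG.
Qed.

Lemma is_lcounit_equiv_comult (P : B -> Prop) (D D0 : A -> A -> A -> fv (A * A))
    (eps : A -> B) :
  (forall c a b, fequiv (rel2 P s t) (D0 c a b) (D c a b)) ->
  is_lcounit mA mB P s t D eps -> is_lcounit mA mB P s t D0 eps.
Proof.
rewrite /is_lcounit; cbv zeta.
move=> D0D [eps_P [eps_lin [eps_s [eps_t [eps_rho eps_lambda]]]]].
do 4 (split; first by []).
split=> a b L DL; [apply: eps_rho | apply: eps_lambda] => a';
  exact: fequiv_trans (fequiv_sym (D0D _ _ _)) (DL _).
Qed.

End BaseChange.

Section IdealBase.
Variables (A B : lmodType CC) (mA : A -> A -> A) (mB : B -> B -> B)
  (s t : B -> A -> A) (D : A -> A -> A -> fv (A * A)) (B0 : B -> Prop).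
Hypotheses (LMB : is_LMB mA mB (fun _ => True) s t D) (B0_ideal : is_ideal mB B0)
  (B0_spans_s : spans B0 s).

Lemma inspan_rel_ideal :
  inspan (rel2 (fun _ => True) s t) = inspan (rel2 B0 s t) /\
  inspan (rel3 (fun _ => True) s t) = inspan (rel3 B0 s t).
Proof.
move: LMB B0_ideal; rewrite /is_LMB; cbv zeta.
move=> [_ [[s_mult [_ [s_hom [t_hom _]]]] _]] [_ [_ [_ B0M]]].
have s_lin x : is_lin (s x) by exact: (s_mult x I).1.
have sM x y a : s (mB x y) a = s x (s y a) by case: (s_hom x y I I).
have tM x y a : t (mB x y) a = t y (t x a) by case: (t_hom x y I I).
have B0_mull x y : B0 y -> B0 (mB x y) by move=> /(B0M x) [].
split; apply: funext => u; apply: propext.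
- exact: inspan_rel2_ideal s_lin sM tM B0_mull B0_spans_s u.
- exact: inspan_rel3_ideal s_lin sM tM B0_mull B0_spans_s u.
Qed.

Lemma fequiv_rel2_ideal :
  fequiv (rel2 (fun _ => True) s t) = fequiv (rel2 B0 s t).
Proof. by rewrite /fequiv (inspan_rel_ideal).1. Qed.

Lemma fequiv_rel3_ideal :
  fequiv (rel3 (fun _ => True) s t) = fequiv (rel3 B0 s t).
Proof. by rewrite /fequiv (inspan_rel_ideal).2. Qed.

Lemma is_LMB_ideal : spans B0 t -> is_LMB mA mB B0 s t D.
Proof.
move=> B0_spans_t; move: LMB; rewrite /is_LMB; cbv zeta.
rewrite -fequiv_rel2_ideal -(inspan_rel_ideal).1 -fequiv_rel3_ideal.
move=> [[algA [algB [_ base]]] [[s_mult [t_mult [s_hom [t_hom st_comm]]]]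
  [[s_inj [t_inj [_ [_ nondeg]]]] [comult [Div Dv]]]]].
case: B0_ideal => B0_0 [B0D [B0Z B0M]].
split.
  do 2 (split; first by []); split; last exact: base.
  by do 3 (split; first by []); move=> x y _ /(B0M x) [].
split.
  split=> [x _|]; first exact: s_mult.
  split=> [x _|]; first exact: t_mult.
  split=> [x y _ _|]; first exact: s_hom.
  by split=> [x y _ _|x y _ _]; [apply: t_hom | apply: st_comm].
split.
  split=> [x y _ _|]; first exact: s_inj.
  by split=> [x y _ _|]; first exact: t_inj.
split=> //; split=> [x y x' y' _ _ _ _|//]; exact: Div.
Qed.

Lemma is_lcounit_ideal (eps : A -> B) :
  is_lcounit mA mB (fun _ => True) s t D eps -> is_lcounit mA mB B0 s t D eps.
Proof.
rewrite /is_lcounit; cbv zeta; rewrite -fequiv_rel2_ideal.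
move=> [_ [eps_lin [eps_s [eps_t eps_T]]]].
split.
  apply: (spans_ind (Q := fun a => B0 (eps a)) B0_spans_s) => [|a a' B0a B0a'|x c B0x].
  - by rewrite (is_lin0 eps_lin); case: B0_ideal.
  - by rewrite eps_lin.1; case: B0_ideal => _ [B0D _]; apply: B0D.
  - by rewrite eps_s //; case: B0_ideal => _ [_ [_ /(_ (eps c) x B0x) []]].
by split=> //; split=> [x a _|]; [apply: eps_s | split=> [y a _|]; first apply: eps_t].
Qed.

End IdealBase.

Unset Implicit Arguments.
Set Strict Implicit.

Theorem lemma3p7 (A B : lmodType CC) (mA : A -> A -> A) (mB : B -> B -> B)
    (s t : B -> A -> A) (D : A -> A -> A -> fv (A * A)) (B0 : B -> Prop) :
  is_LMB mA mB (fun _ => True) s t D ->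
  is_ideal mB B0 -> spans B0 s -> spans B0 t ->
  (forall v w : fv (A * A),
     fequiv (rel2 (fun _ => True) s t) v w <-> fequiv (rel2 B0 s t) v w) /\
  (forall D0 : A -> A -> A -> fv (A * A),
     (forall c a b, fequiv (rel2 (fun _ => True) s t) (D0 c a b) (D c a b)) ->
     is_LMB mA mB B0 s t D0 /\
     (forall eps : A -> B, is_lcounit mA mB (fun _ => True) s t D eps ->
        is_lcounit mA mB B0 s t D0 eps)).
Proof.
move=> LMB B0_ideal B0_spans_s B0_spans_t.
split=> [v w|D0 D0D]; first by rewrite (fequiv_rel2_ideal LMB B0_ideal B0_spans_s).
have LMB0 := is_LMB_equiv_comult LMB D0D.
split; first exact: is_LMB_ideal.
move=> eps /(is_lcounit_equiv_comult D0D).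
exact/(is_lcounit_ideal LMB0 B0_ideal B0_spans_s).
Qed.
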